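(* Let $\tau_1(\mathbf X)$ be the lifetime of a coherent system whose component lifetimes $X_1,\dots,X_n$ are (possibly dependent) identically distributed as $X$, with domination function $h_1$, i.e. $\bar F_{\tau_1(\mathbf X)}(x)=h_1(\bar F_X(x))$; and let $\tau_2(\mathbf Y)$ be the lifetime of a coherent system whose component lifetimes $Y_1,\dots,Y_m$ are identically distributed as $Y$, with domination function $h_2$, i.e. $\bar F_{\tau_2(\mathbf Y)}(x)=h_2(\bar F_Y(x))$. For $p\in(0,1)$ set $H_i(p)=p h_i'(p)/h_i(p)$, $i=1,2$. Suppose that (i) $H_1(p)$ and $H_1(p)/H_2(p)$ are decreasing in $p\in(0,1)$; (ii) $(1-p)H_1'(p)/H_1(p)$ or $(1-p)H_2'(p)/H_2(p)$ is decreasing in $p\in(0,1)$; (iii) $X\underset{c}{\prec}Y$ and $Y\le_{rhr}X$. Then $\tau_1(\mathbf X)\underset{c}{\prec}\tau_2(\mathbf Y)$.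
   Context: All random variables are non-negative and absolutely continuous with support $[0,\infty)$. For a random variable $W$, $f_W$, $F_W$, $\bar F_W=1-F_W$ denote its density, cdf and survival function, $r_W=f_W/\bar F_W$ its hazard (failure) rate and $\tilde r_W=f_W/F_W$ its reversed hazard rate. $X\le_{rhr}Y$ means $F_Y(x)/F_X(x)$ is increasing in $x$. $X\underset{c}{\prec}Y$ ($X$ ages faster than $Y$ in failure rate) means $r_X(x)/r_Y(x)$ is increasing in $x\ge0$. For a coherent system with identically distributed (possibly dependent) components with common lifetime distribution $X$, the system reliability can be written $h(\bar F_X(x))$, where the domination (dual distortion) function $h:[0,1]\to[0,1]$ depends on the structure and the survival copula, is increasing and continuous with $h(0)=0$, $h(1)=1$; domination functions are assumed differentiable as needed. ''Increasing'' means non-decreasing, ''decreasing'' means non-increasing. *)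

From Stdlib Require Import Reals.
From Coquelicot Require Import Coquelicot.
Open Scope R_scope.

(* A non-negative absolutely continuous lifetime with support [0,oo),
   described by its survival function Sbar = 1 - F. *)
Definition lifetime (S : R -> R) : Prop :=
  (forall x, x <= 0 -> S x = 1) /\
  (forall x y, 0 <= x -> x < y -> S y < S x) /\
  (forall x, continuous S x) /\
  is_lim S p_infty 0 /\
  (forall x, 0 < x -> ex_derive S x).

Definition density (S : R -> R) (x : R) : R := - Derive S x.
Definition cdf (S : R -> R) (x : R) : R := 1 - S x.
Definition hazard (S : R -> R) (x : R) : R := density S x / S x.
Definition rev_hazard (S : R -> R) (x : R) : R := density S x / cdf S x.

Definition rhr_le (SX SY : R -> R) : Prop :=
  forall x y, 0 < x -> x <= y -> cdf SY x / cdf SX x <= cdf SY y / cdf SX y.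

Definition ages_faster (SX SY : R -> R) : Prop :=
  forall x y, 0 < x -> x <= y -> hazard SX x / hazard SY x <= hazard SX y / hazard SY y.

Definition domination (h : R -> R) : Prop :=
  h 0 = 0 /\ h 1 = 1 /\
  (forall p q, 0 <= p -> p <= q -> q <= 1 -> h p <= h q) /\
  (forall p, 0 <= p <= 1 -> 0 <= h p <= 1) /\
  (forall p, 0 <= p <= 1 -> continuous h p) /\
  (forall p, 0 < p < 1 -> ex_derive h p) /\
  (forall p, 0 < p < 1 -> ex_derive (Derive h) p).

Definition Hfun (h : R -> R) (p : R) : R := p * Derive h p / h p.

Definition decreasing_01 (g : R -> R) : Prop :=
  forall p q, 0 < p -> p <= q -> q < 1 -> g q <= g p.

From Stdlib Require Import Reals Lra.
From Coquelicot Require Import Coquelicot.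
Open Scope R_scope.

(* By the chain rule, the hazard of a system with reliability [h (S x)] is
   [r_S(x) * H(S(x))], so the ratio of the two system hazards is
   [(r_X / r_Y)(x) * G(x)] with [G(x) = H1(u) / H2(v)], [u = S_X(x)], [v = S_Y(x)].
   The first factor increases since X ages faster than Y, so it suffices that G
   increases.  [Y <=rhr X] gives [v <= u] and [b <= a] for the reversed hazards
   [a] of X and [b] of Y, and the sign of [G'] is that of [b Psi2(v) - a Psi1(u)]
   with [Psi_i(p) = (1 - p) H_i'(p) / H_i(p)].  Hypothesis (i) gives [Psi1 <= 0]
   and [Psi1 <= Psi2]; with either monotonicity in (ii) these chain into
   [a Psi1(u) <= b Psi2(v)]. *)

Lemma Rdiv_nonneg (a b : R) : 0 <= a -> 0 <= b -> 0 <= a / b.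
Proof.
  intros Ha [Hb | <-].
  - now apply Rdiv_le_0_compat.
  - rewrite Rdiv_0_r; lra.
Qed.

Lemma is_derive_ge0_of_right_nondecreasing (f : R -> R) (x l d : R) :
  0 < d -> is_derive f x l -> (forall y, x < y < x + d -> f x <= f y) -> 0 <= l.
Proof.
  intros Hd Hf Hmono. apply is_derive_Reals in Hf.
  destruct (Rle_or_lt 0 l) as [|Hl]; [assumption|].
  destruct (Hf (- l / 2)) as [[del Hdel] Hclose]; [lra|]. simpl in Hclose.
  set (k := Rmin (del / 2) (d / 2)).
  assert (Hk : 0 < k) by (apply Rmin_pos; lra).
  assert (Hk_del : k < del) by (generalize (Rmin_l (del / 2) (d / 2)); fold k; lra).
  assert (Hk_d : k < d) by (generalize (Rmin_r (del / 2) (d / 2)); fold k; lra).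
  specialize (Hclose k ltac:(lra) ltac:(rewrite Rabs_right; lra)).
  assert (Hquot : 0 <= (f (x + k) - f x) / k).
  { apply Rdiv_le_0_compat; [specialize (Hmono (x + k)); lra | lra]. }
  apply Rabs_def2 in Hclose. lra.
Qed.

Lemma is_derive_le0_of_right_nonincreasing (f : R -> R) (x l d : R) :
  0 < d -> is_derive f x l -> (forall y, x < y < x + d -> f y <= f x) -> l <= 0.
Proof.
  intros Hd Hf Hmono.
  enough (0 <= - l) by lra.
  apply (is_derive_ge0_of_right_nondecreasing (fun y => - f y) x _ d Hd).
  - exact (is_derive_opp f x l Hf).
  - intros y Hy. specialize (Hmono y Hy). lra.
Qed.

Lemma nondecreasing_of_derive_ge0 (f : R -> R) (x y : R) : x <= y ->
  (forall t, x <= t <= y -> exists l, is_derive f t l /\ 0 <= l) -> f x <= f y.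
Proof.
  intros Hxy Hder.
  assert (Hcorrect : forall t, x <= t <= y -> is_derive f t (Derive f t)).
  { intros t Ht. destruct (Hder t Ht) as [l [Hl _]].
    now rewrite (is_derive_unique f t l Hl). }
  destruct (MVT_gen f x y (Derive f)) as [c [Hc Hmvt]];
    rewrite ?Rmin_left, ?Rmax_right in * by lra.
  - intros t Ht. apply Hcorrect. lra.
  - intros t Ht. apply derivable_continuous_pt.
    exists (Derive f t). apply is_derive_Reals, Hcorrect. lra.
  - destruct (Hder c Hc) as [l [Hl Hl0]].
    rewrite (is_derive_unique f c l Hl) in Hmvt.
    assert (0 <= l * (y - x)) by (apply Rmult_le_pos; lra).
    lra.
Qed.

Section Lifetime.

Variable S : R -> R.
Hypothesis HS : lifetime S.

Lemma lifetime_antitone (x y : R) : 0 <= x -> x <= y -> S y <= S x.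
Proof.
  destruct HS as [_ [Hdecr _]]. intros Hx [Hxy | <-]; [|lra].
  left. now apply Hdecr.
Qed.

Lemma lifetime_is_lim_cdf : is_lim (cdf S) p_infty 1.
Proof.
  destruct HS as [_ [_ [_ [Hlim _]]]]. unfold cdf.
  apply (is_lim_minus _ _ _ 1 0); [apply is_lim_const | exact Hlim |].
  unfold is_Rbar_minus, is_Rbar_plus; simpl. do 2 f_equal. ring.
Qed.

Lemma lifetime_pos (x : R) : 0 < x -> 0 < S x.
Proof.
  intros Hx. destruct HS as [_ [Hdecr [_ [Hlim _]]]].
  assert (Hstep : S (x + 1) < S x) by (apply Hdecr; lra).
  enough (Rbar_le 0 (S (x + 1))) by (simpl in *; lra).
  apply (is_lim_le_loc S (fun _ => S (x + 1)) p_infty); [| exact Hlim | apply is_lim_const].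
  exists (x + 1). intros y Hy. apply lifetime_antitone; lra.
Qed.

Lemma lifetime_lt1 (x : R) : 0 < x -> S x < 1.
Proof.
  destruct HS as [H0 [Hdecr _]]. intros Hx.
  rewrite <- (H0 0) by lra. apply Hdecr; lra.
Qed.

Lemma is_derive_survival (x : R) : 0 < x -> is_derive S x (- density S x).
Proof.
  destruct HS as [_ [_ [_ [_ Hder]]]]. intros Hx.
  unfold density. rewrite Ropp_involutive. now apply Derive_correct, Hder.
Qed.

Lemma density_ge0 (x : R) : 0 < x -> 0 <= density S x.
Proof.
  intros Hx.
  enough (- density S x <= 0) by lra.
  apply (is_derive_le0_of_right_nonincreasing S x _ 1); [lra | now apply is_derive_survival |].
  intros y Hy. apply lifetime_antitone; lra.
Qed.

Lemma is_derive_cdf (x : R) : 0 < x -> is_derive (cdf S) x (density S x).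
Proof.
  intros Hx.
  replace (density S x) with (minus 0 (- density S x))
    by (unfold minus, plus, opp; simpl; ring).
  exact (is_derive_minus (fun _ => 1) S x 0 _ (is_derive_const 1 x) (is_derive_survival x Hx)).
Qed.

Lemma hazard_ge0 (x : R) : 0 < x -> 0 <= hazard S x.
Proof.
  intros Hx. apply Rdiv_le_0_compat; [now apply density_ge0 | now apply lifetime_pos].
Qed.

End Lifetime.

Section ReversedHazard.

Variables SX SY : R -> R.
Hypothesis HX : lifetime SX.
Hypothesis HY : lifetime SY.
Hypothesis Hrhr : rhr_le SY SX.

Lemma rhr_le_survival_le (z : R) : 0 < z -> SY z <= SX z.
Proof.
  intros Hz.
  assert (HFX : 0 < cdf SX z) by (unfold cdf; pose proof (lifetime_lt1 SX HX z Hz); lra).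
  assert (HFY : 0 < cdf SY z) by (unfold cdf; pose proof (lifetime_lt1 SY HY z Hz); lra).
  assert (Hratio : Rbar_le (cdf SX z / cdf SY z) 1).
  { apply (is_lim_le_loc (fun _ => cdf SX z / cdf SY z) (fun y => cdf SX y / cdf SY y) p_infty).
    - exists z. intros y Hy. apply Hrhr; lra.
    - apply is_lim_const.
    - replace (Finite 1) with (Rbar_div 1 1) by (simpl; f_equal; field).
      apply is_lim_div; try apply lifetime_is_lim_cdf; try easy.
      intros H. injection H. lra. }
  simpl in Hratio. apply Rle_div_l in Hratio; [| exact HFY].
  unfold cdf in Hratio. lra.
Qed.

Lemma rhr_le_rev_hazard (z : R) : 0 < z -> rev_hazard SY z <= rev_hazard SX z.
Proof.
  intros Hz.
  assert (HFX : 0 < cdf SX z) by (unfold cdf; pose proof (lifetime_lt1 SX HX z Hz); lra).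
  assert (HFY : 0 < cdf SY z) by (unfold cdf; pose proof (lifetime_lt1 SY HY z Hz); lra).
  set (D := (density SX z * cdf SY z - cdf SX z * density SY z) / cdf SY z ^ 2).
  assert (HD : 0 <= D).
  { apply (is_derive_ge0_of_right_nondecreasing (fun y => cdf SX y / cdf SY y) z _ 1); [lra | |].
    - apply is_derive_div; [now apply is_derive_cdf .. | lra].
    - intros y Hy. apply Hrhr; lra. }
  assert (E : rev_hazard SX z - rev_hazard SY z = D * (cdf SY z / cdf SX z))
    by (unfold rev_hazard, D; field; lra).
  assert (0 <= D * (cdf SY z / cdf SX z))
    by (apply Rmult_le_pos; [exact HD | apply Rdiv_le_0_compat; lra]).
  lra.
Qed.

End ReversedHazard.

Definition Psi (h : R -> R) (p : R) : R := (1 - p) * Derive (Hfun h) p / Hfun h p.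

Section Domination.

Variable h : R -> R.
Hypothesis Hh : domination h.
Hypothesis Hh_pos : forall p, 0 < p < 1 -> 0 < h p.

Lemma Derive_domination_ge0 (p : R) : 0 < p < 1 -> 0 <= Derive h p.
Proof.
  destruct Hh as [_ [_ [Hmono [_ [_ [Hder _]]]]]]. intros Hp.
  apply (is_derive_ge0_of_right_nondecreasing h p _ (1 - p)); [lra | now apply Derive_correct, Hder |].
  intros q Hq. apply Hmono; lra.
Qed.

Lemma Hfun_ge0 (p : R) : 0 < p < 1 -> 0 <= Hfun h p.
Proof.
  intros Hp. apply Rdiv_le_0_compat; [| now apply Hh_pos].
  apply Rmult_le_pos; [lra | now apply Derive_domination_ge0].
Qed.

Lemma is_derive_Hfun (p : R) : 0 < p < 1 -> is_derive (Hfun h) p (Derive (Hfun h) p).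
Proof.
  destruct Hh as [_ [_ [_ [_ [_ [Hder Hder2]]]]]]. intros Hp.
  apply Derive_correct, ex_derive_div.
  - apply ex_derive_mult; [apply ex_derive_id | now apply Hder2].
  - now apply Hder.
  - specialize (Hh_pos p Hp). lra.
Qed.

Lemma Derive_Hfun_le0 (p : R) : decreasing_01 (Hfun h) -> 0 < p < 1 -> Derive (Hfun h) p <= 0.
Proof.
  intros Hdec Hp.
  apply (is_derive_le0_of_right_nonincreasing (Hfun h) p _ (1 - p)); [lra | now apply is_derive_Hfun |].
  intros q Hq. apply Hdec; lra.
Qed.

Lemma Psi_le0 (p : R) : decreasing_01 (Hfun h) -> 0 < p < 1 -> Psi h p <= 0.
Proof.
  intros Hdec Hp. unfold Psi. rewrite <- (Ropp_involutive ((1 - p) * _)), Rdiv_opp_l.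
  enough (0 <= - ((1 - p) * Derive (Hfun h) p) / Hfun h p) by lra.
  apply Rdiv_nonneg; [| now apply Hfun_ge0].
  pose proof (Derive_Hfun_le0 p Hdec Hp). nra.
Qed.

Lemma hazard_distorted (S : R -> R) (t : R) : lifetime S -> 0 < t ->
  hazard (fun x => h (S x)) t = hazard S t * Hfun h (S t).
Proof.
  destruct Hh as [_ [_ [_ [_ [_ [Hder _]]]]]]. intros HS Ht.
  assert (Hu : 0 < S t < 1) by (split; [now apply lifetime_pos | now apply lifetime_lt1]).
  unfold hazard, density, Hfun. rewrite Derive_comp.
  - specialize (Hh_pos _ Hu). field. lra.
  - now apply Hder.
  - destruct HS as [_ [_ [_ [_ HSder]]]]. now apply HSder.
Qed.

End Domination.

Section Ratio.

Variables h1 h2 : R -> R.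
Hypothesis H1d : domination h1.
Hypothesis H2d : domination h2.
Hypothesis H1pos : forall p, 0 < p < 1 -> 0 < h1 p.
Hypothesis H2pos : forall p, 0 < p < 1 -> 0 < h2 p.
Hypothesis H1dec : decreasing_01 (Hfun h1).
Hypothesis H12dec : decreasing_01 (fun p => Hfun h1 p / Hfun h2 p).
Hypothesis Psi_dec : decreasing_01 (Psi h1) \/ decreasing_01 (Psi h2).

Lemma Psi_le_of_ratio_decreasing (p : R) : 0 < p < 1 ->
  0 < Hfun h1 p -> 0 < Hfun h2 p -> Psi h1 p <= Psi h2 p.
Proof.
  intros Hp HH1 HH2.
  set (D := (Derive (Hfun h1) p * Hfun h2 p - Hfun h1 p * Derive (Hfun h2) p) / Hfun h2 p ^ 2).
  assert (HD : D <= 0).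
  { apply (is_derive_le0_of_right_nonincreasing (fun q => Hfun h1 q / Hfun h2 q) p _ (1 - p));
      [lra | |].
    - apply is_derive_div; [now apply is_derive_Hfun .. | lra].
    - intros q Hq. apply H12dec; lra. }
  assert (E : Psi h2 p - Psi h1 p = (1 - p) * (- D) * (Hfun h2 p / Hfun h1 p))
    by (unfold Psi, D; field; lra).
  assert (0 <= (1 - p) * (- D) * (Hfun h2 p / Hfun h1 p)).
  { apply Rmult_le_pos; [apply Rmult_le_pos; lra | apply Rdiv_le_0_compat; lra]. }
  lra.
Qed.

Lemma weighted_Psi_le (u v a b : R) : 0 < v <= u -> u < 1 -> 0 <= b <= a ->
  0 < Hfun h1 u -> 0 < Hfun h2 v -> a * Psi h1 u <= b * Psi h2 v.
Proof.
  intros Hvu Hu Hba HH1u HH2v.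
  destruct Psi_dec as [Hdec | Hdec].
  - assert (HH1v : 0 < Hfun h1 v) by (enough (Hfun h1 u <= Hfun h1 v) by lra; apply H1dec; lra).
    pose proof (Psi_le0 h1 H1d H1pos v H1dec ltac:(lra)).
    assert (Hstep1 : Psi h1 u <= Psi h1 v) by (apply Hdec; lra).
    assert (Hstep2 : Psi h1 v <= Psi h2 v) by (apply Psi_le_of_ratio_decreasing; lra).
    nra.
  - destruct (Rle_or_lt 0 (Psi h2 v)) as [Hv0 | Hv0].
    + pose proof (Psi_le0 h1 H1d H1pos u H1dec ltac:(lra)). nra.
    + assert (Hstep1 : Psi h2 u <= Psi h2 v) by (apply Hdec; lra).
      assert (HH2u : 0 < Hfun h2 u).
      { (* [x / 0 = 0], so [Psi h2 u < 0] rules out [Hfun h2 u = 0]. *)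
        destruct (Hfun_ge0 h2 H2d H2pos u ltac:(lra)) as [| Hz]; [assumption |].
        assert (Psi h2 u = 0) by (unfold Psi; rewrite <- Hz; apply Rdiv_0_r). lra. }
      assert (Hstep2 : Psi h1 u <= Psi h2 u) by (apply Psi_le_of_ratio_decreasing; lra).
      nra.
Qed.


Variables SX SY : R -> R.
Hypothesis HX : lifetime SX.
Hypothesis HY : lifetime SY.
Hypothesis Hrhr : rhr_le SY SX.

Definition Hratio (t : R) : R := Hfun h1 (SX t) / Hfun h2 (SY t).

Lemma Hratio_ge0 (t : R) : 0 < t -> 0 <= Hratio t.
Proof.
  intros Ht. apply Rdiv_nonneg; apply Hfun_ge0; try assumption;
    split; (apply lifetime_pos || apply lifetime_lt1); assumption.
Qed.

Lemma is_derive_Hratio_ge0 (t : R) : 0 < t ->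
  0 < Hfun h1 (SX t) -> 0 < Hfun h2 (SY t) -> exists l, is_derive Hratio t l /\ 0 <= l.
Proof.
  intros Ht HH1 HH2.
  assert (Hu : 0 < SX t < 1) by (split; [now apply lifetime_pos | now apply lifetime_lt1]).
  assert (Hv : 0 < SY t < 1) by (split; [now apply lifetime_pos | now apply lifetime_lt1]).
  eexists. split.
  { unfold Hratio. apply is_derive_div; [| | lra];
      (apply is_derive_comp; [apply is_derive_Hfun | apply is_derive_survival]); auto. }
  set (a := rev_hazard SX t). set (b := rev_hazard SY t).
  assert (E : forall dX dY, dX = a * (1 - SX t) -> dY = b * (1 - SY t) ->
    (scal (- dX) (Derive (Hfun h1) (SX t)) * Hfun h2 (SY t)
       - Hfun h1 (SX t) * scal (- dY) (Derive (Hfun h2) (SY t))) / Hfun h2 (SY t) ^ 2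
    = (b * Psi h2 (SY t) - a * Psi h1 (SX t)) * (Hfun h1 (SX t) / Hfun h2 (SY t))).
  { intros dX dY -> ->. unfold scal; simpl. unfold mult; simpl. unfold Psi. field; lra. }
  rewrite E by (unfold a, b, rev_hazard, cdf; field; lra).
  apply Rmult_le_pos; [| apply Rdiv_le_0_compat; lra].
  enough (a * Psi h1 (SX t) <= b * Psi h2 (SY t)) by lra.
  apply weighted_Psi_le; try lra.
  - split; [lra | now apply rhr_le_survival_le].
  - split; [apply Rdiv_le_0_compat; [now apply density_ge0 | unfold cdf; lra] |].
    now apply rhr_le_rev_hazard.
Qed.

Lemma Hfun_pos_propagates (x z : R) : 0 < x -> x <= z ->
  0 < Hfun h1 (SX x) -> 0 < Hfun h2 (SY x) -> 0 < Hfun h1 (SX z) /\ 0 < Hfun h2 (SY z).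
Proof.
  intros Hx Hxz HH1 HH2.
  pose proof (lifetime_pos SX HX z ltac:(lra)). pose proof (lifetime_pos SY HY z ltac:(lra)).
  pose proof (lifetime_lt1 SX HX x Hx). pose proof (lifetime_lt1 SY HY x Hx).
  pose proof (lifetime_antitone SX HX x z ltac:(lra) Hxz).
  pose proof (lifetime_antitone SY HY x z ltac:(lra) Hxz).
  pose proof (rhr_le_survival_le SX SY HX HY Hrhr x Hx).
  split.
  - enough (Hfun h1 (SX x) <= Hfun h1 (SX z)) by lra. apply H1dec; lra.
  - assert (HH1Y : 0 < Hfun h1 (SY x)) by (enough (Hfun h1 (SX x) <= Hfun h1 (SY x)) by lra; apply H1dec; lra).
    assert (Hq : 0 < Hfun h1 (SY x) / Hfun h2 (SY x)) by (apply Rdiv_lt_0_compat; lra).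
    assert (Hq' : Hfun h1 (SY x) / Hfun h2 (SY x) <= Hfun h1 (SY z) / Hfun h2 (SY z))
      by (apply H12dec; lra).
    destruct (Hfun_ge0 h2 H2d H2pos (SY z) ltac:(lra)) as [| Hz]; [assumption |].
    rewrite <- Hz, Rdiv_0_r in Hq'. lra.
Qed.

Lemma Hratio_nondecreasing (x y : R) : 0 < x -> x <= y -> Hratio x <= Hratio y.
Proof.
  intros Hx Hxy.
  destruct (Hfun_ge0 h1 H1d H1pos (SX x)) as [HH1 | HH1];
    [split; [now apply lifetime_pos | now apply lifetime_lt1] | |];
  [destruct (Hfun_ge0 h2 H2d H2pos (SY x)) as [HH2 | HH2];
    [split; [now apply lifetime_pos | now apply lifetime_lt1] | |] |].
  - apply nondecreasing_of_derive_ge0; [assumption |].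
    intros t Ht. destruct (Hfun_pos_propagates x t Hx (proj1 Ht) HH1 HH2).
    apply is_derive_Hratio_ge0; lra.
  - unfold Hratio at 1. rewrite <- HH2, Rdiv_0_r. apply Hratio_ge0. lra.
  - unfold Hratio at 1. rewrite <- HH1, Rdiv_0_l. apply Hratio_ge0. lra.
Qed.

End Ratio.

Theorem theorem3p1 (SX SY h1 h2 : R -> R) :
  lifetime SX -> lifetime SY ->
  domination h1 -> domination h2 ->
  (forall p, 0 < p < 1 -> 0 < h1 p) ->
  (forall p, 0 < p < 1 -> 0 < h2 p) ->
  decreasing_01 (Hfun h1) ->
  decreasing_01 (fun p => Hfun h1 p / Hfun h2 p) ->
  (decreasing_01 (fun p => (1 - p) * Derive (Hfun h1) p / Hfun h1 p) \/
   decreasing_01 (fun p => (1 - p) * Derive (Hfun h2) p / Hfun h2 p)) ->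
  ages_faster SX SY ->
  rhr_le SY SX ->
  ages_faster (fun x => h1 (SX x)) (fun x => h2 (SY x)).
Proof.
  intros HX HY H1d H2d H1pos H2pos H1dec H12dec Psi_dec Hfaster Hrhr x y Hx Hxy.
  assert (Hsplit : forall t, 0 < t ->
    hazard (fun z => h1 (SX z)) t / hazard (fun z => h2 (SY z)) t
    = hazard SX t / hazard SY t * Hratio h1 h2 SX SY t).
  { intros t Ht. unfold Hratio.
    rewrite (hazard_distorted h1), (hazard_distorted h2) by assumption.
    unfold Rdiv. rewrite Rinv_mult. ring. }
  rewrite !Hsplit by lra.
  apply Rmult_le_compat.
  - apply Rdiv_nonneg; now apply hazard_ge0.
  - now apply Hratio_ge0.
  - now apply Hfaster.
  - now apply (Hratio_nondecreasing h1 h2).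
Qed.
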